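(* Let Assumptions 1 and 2 hold. For every $\eta>0$, every horizon $T\ge 1$ and every sequence of payoff vectors $u_1,\dots,u_T\in\mathbb{R}^N$ with $\|u_t\|_\infty\le u_{\max}$, the regret of the SSA with parameter $\eta$ satisfies $$R^T_{SSA}\le \eta\,\varphi_1(0)+\frac{L}{2\eta}\,T\,u_{\max}^2 ,$$ where $\varphi_1(0)=\mathbb{E}[\max_{i\in A}\epsilon_i]$. Moreover, if $\varphi_1(0)>0$ and $\eta=\sqrt{\frac{L T u_{\max}^2}{2\varphi_1(0)}}$, then $$R^T_{SSA}\le u_{\max}\sqrt{2\,\varphi_1(0)\,L\,T}.$$
   Context: Let $N\ge 2$, $A=\{1,\dots,N\}$, and $\Delta_N=\{x\in\mathbb{R}^N: x_i\ge 0,\ \sum_i x_i=1\}$. Let $\epsilon=(\epsilon_1,\dots,\epsilon_N)$ be a random vector satisfying Assumption 1: each $\epsilon_i$ is integrable with $\mathbb{E}[\epsilon_i]=0$, and the law of $\epsilon$ is absolutely continuous with respect to Lebesgue measure on $\mathbb{R}^N$ with support all of $\mathbb{R}^N$. For $\eta>0$ the social surplus function is $\varphi_\eta(\theta)=\mathbb{E}[\max_{j\in A}(\theta_j+\eta\epsilon_j)]$, $\theta\in\mathbb{R}^N$; thus $\varphi_\eta(\theta)=\eta\varphi_1(\theta/\eta)$. $\varphi_\eta$ is convex and differentiable with $\nabla\varphi_\eta(\theta)\in\Delta_N$. Assumption 2: $\varphi_1$ is twice continuously differentiable and there is a constant $L>0$ with $2\,\mathrm{tr}(\nabla^2\varphi_1(\theta))\le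 L$ for all $\theta\in\mathbb{R}^N$. Online decision problem: payoff vectors $u_1,\dots,u_T\in\mathbb{R}^N$ are arbitrary (possibly adversarial, possibly depending on past choices); set $\theta_0=0$ and $\theta_t=\sum_{s=1}^t u_s$. The regret of a sequence $x_1,\dots,x_T\in\Delta_N$ is $R^T=\max_{x\in\Delta_N}\langle\theta_T,x\rangle-\sum_{t=1}^T\langle u_t,x_t\rangle$. The Social Surplus Algorithm (SSA) with parameter $\eta$ chooses $x_t=\nabla\varphi_\eta(\theta_{t-1})$ for $t=1,\dots,T$; $R^T_{SSA}$ is its regret. *)

From HB Require Import structures.
From mathcomp Require Import all_boot all_order all_algebra.
From mathcomp Require Import all_classical all_reals all_analysis.
Set Implicit Arguments. Unset Strict Implicit. Unset Printing Implicit Defensive.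
Import Order.TTheory GRing.Theory Num.Theory.
Import numFieldNormedType.Exports.
Local Open Scope classical_set_scope.
Local Open Scope ring_scope.

(* Vectors of R^N are row vectors 'rV[R]_N; coordinate i is v 0 i. *)

Definition dotv {R : realType} {N : nat} (x y : 'rV[R]_N) : R :=
  \sum_(i < N) x 0 i * y 0 i.

Definition simplex {R : realType} (N : nat) : set 'rV[R]_N :=
  [set x | (forall i, 0 <= x 0 i) /\ \sum_(i < N) x 0 i = 1].

Definition obox {R : realType} {N : nat} (a b : 'rV[R]_N) : set 'rV[R]_N :=
  [set x | forall i, a 0 i < x 0 i < b 0 i].
Definition bvol {R : realType} {N : nat} (a b : 'rV[R]_N) : R :=
  \prod_(i < N) (b 0 i - a 0 i).

Definition lebesgue_null {R : realType} {N : nat} (B : set 'rV[R]_N) : Prop :=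
  forall e : R, 0 < e ->
    exists a b : nat -> 'rV[R]_N,
      (forall k i, a k 0 i < b k 0 i) /\
      B `<=` \bigcup_k obox (a k) (b k) /\
      (forall n, \sum_(k < n) bvol (a k) (b k) <= e).

Definition assumption1 {R : realType} {N : nat} {d : measure_display}
  {Omega : measurableType d} (P : probability Omega R)
  (eps : Omega -> 'rV[R]_N) : Prop :=
  (forall i, measurable_fun setT (fun w => eps w 0 i)) /\
  (forall i, P.-integrable setT (fun w => (eps w 0 i)%:E)) /\
  (forall i, expectation P (fun w => eps w 0 i) = 0%E) /\
  (* the law of eps is absolutely continuous w.r.t. Lebesgue measure *)
  (forall B : set 'rV[R]_N, lebesgue_null B ->
     measurable (eps @^-1` B) -> P (eps @^-1` B) = 0%E) /\
  (* the support of the law of eps is all of R^N *)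
  (forall (x : 'rV[R]_N) (r : R), 0 < r -> (0 < P (eps @^-1` ball x r))%E).

Definition surplus {R : realType} {N : nat} {d : measure_display}
  {Omega : measurableType d} (P : probability Omega R)
  (eps : Omega -> 'rV[R]_N) (eta : R) (theta : 'rV[R]_N) : R :=
  fine (\int[P]_w (\big[Order.max/-oo%E]_(j < N) (theta 0 j + eta * eps w 0 j)%:E))%E.

Definition evec {R : realType} {N : nat} (i : 'I_N) : 'rV[R]_N := delta_mx 0 i.
Definition partial {R : realType} {N : nat} (i : 'I_N)
  (f : 'rV[R]_N -> R) : 'rV[R]_N -> R :=
  fun x => 'D_(evec i) f x.
Definition grad {R : realType} {N : nat} (f : 'rV[R]_N -> R)
  (x : 'rV[R]_N) : 'rV[R]_N :=
  \row_i partial i f x.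

Definition C2 {R : realType} {N : nat} (f : 'rV[R]_N -> R) : Prop :=
  (forall x, differentiable f x) /\
  (forall i x, differentiable (partial i f) x) /\
  (forall i j, continuous (partial j (partial i f))).

Definition hess_trace {R : realType} {N : nat} (f : 'rV[R]_N -> R)
  (x : 'rV[R]_N) : R :=
  \sum_(i < N) partial i (partial i f) x.

Definition assumption2 {R : realType} {N : nat} (phi1 : 'rV[R]_N -> R) (L : R) : Prop :=
  C2 phi1 /\ 0 < L /\ (forall x, 2 * hess_trace phi1 x <= L).

Definition cumul {R : realType} {N : nat} (u : nat -> 'rV[R]_N) (t : nat) : 'rV[R]_N :=
  \sum_(1 <= s < t.+1) u s.

Definition regret {R : realType} {N : nat} (T : nat) (u x : nat -> 'rV[R]_N) : R :=
  sup [set dotv (cumul u T) y | y in @simplex R N]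
  - \sum_(1 <= t < T.+1) dotv (u t) (x t).

Definition ssa {R : realType} {N : nat} {d : measure_display}
  {Omega : measurableType d} (P : probability Omega R)
  (eps : Omega -> 'rV[R]_N) (eta : R) (u : nat -> 'rV[R]_N) (t : nat) : 'rV[R]_N :=
  grad (surplus P eps eta) (cumul u t.-1).

From HB Require Import structures.
From mathcomp Require Import all_boot all_order all_algebra.
From mathcomp Require Import all_classical all_reals all_analysis.
From mathcomp Require Import ring lra measurable_realfun.
Import Order.TTheory GRing.Theory Num.Theory.
Import numFieldNormedType.Exports.
Local Open Scope classical_set_scope.
Local Open Scope ring_scope.

(* Write f := phi_1.  Since phi_eta(theta) = eta f(theta/eta), the SSA plays
   x_t = grad f (theta_{t-1}/eta), and the regret is controlled by the potential
   eta f(theta_t/eta).  Because eps has mean zero, f(theta) >= theta_i, so the best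
   fixed action earns at most eta f(theta_T/eta).  A second-order Taylor bound
   shows that each round raises the potential by at most <u_t, x_t> plus
   eta/2 times the Hessian form of f at u_t/eta.  Adding c to all coordinates adds
   c to f, so the gradient sums to 1 and every column of the Hessian sums to 0;
   the max of utilities is submodular in theta, so the off-diagonal Hessian
   entries are <= 0.  Hence sum_ij |H_ij| = 2 tr H, the quadratic form is at most
   u_max^2 * 2 tr H <= u_max^2 L, and summing over the rounds gives the bound;
   the second claim is the choice of eta balancing its two terms. *)

Section finite_max.
Context {R : realType} {N : nat} (i0 : 'I_N).
Implicit Types (r p q : 'I_N -> R) (c : R).

Definition emaxv r : \bar R := (\big[Order.max/-oo%E]_(j < N) (r j)%:E)%E.
Definition maxv r : R := fine (emaxv r).

Lemma emaxv_attained r : exists j, emaxv r = (r j)%:E.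
Proof.
rewrite /emaxv.
have [j _ ->] := @eq_bigmax _ _ _ (-oo%E) i0 xpredT (fun j => (r j)%:E) isT
  (fun i _ => leNye _).
by exists j.
Qed.

Lemma emaxvE r : emaxv r = (maxv r)%:E.
Proof. by rewrite /maxv; have [j ->] := emaxv_attained r. Qed.

Lemma maxv_attained r : exists j, maxv r = r j.
Proof. by have [j Hj] := emaxv_attained r; exists j; rewrite /maxv Hj. Qed.

Lemma maxv_ub r j : r j <= maxv r.
Proof.
by rewrite -lee_fin -emaxvE; exact: (le_bigmax -oo%E (fun j => (r j)%:E)).
Qed.

Lemma maxv_lub r c : (forall j, r j <= c) -> maxv r <= c.
Proof.
move=> rc; rewrite -lee_fin -emaxvE; apply: bigmax_le => [|j _]; first exact: leNye.
by rewrite lee_fin.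
Qed.

Lemma maxvDr r c : maxv (fun j => r j + c) = maxv r + c.
Proof.
apply/eqP; rewrite eq_le; apply/andP; split.
  by apply: maxv_lub => j; rewrite lerD2r maxv_ub.
by have [j ->] := maxv_attained r; rewrite (maxv_ub (fun j => r j + c)).
Qed.

Lemma maxvZ r c : 0 < c -> maxv (fun j => c * r j) = c * maxv r.
Proof.
move=> c0; apply/eqP; rewrite eq_le; apply/andP; split.
  by apply: maxv_lub => j; rewrite ler_pM2l // maxv_ub.
by have [j ->] := maxv_attained r; rewrite (maxv_ub (fun j => c * r j)).
Qed.

Lemma maxv_norm_le r : `|maxv r| <= \sum_(j < N) `|r j|.
Proof. by have [j ->] := maxv_attained r; rewrite (bigD1 j) //= lerDl sumr_ge0. Qed.

Lemma maxv_max_min p q :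
  maxv (fun j => Num.max (p j) (q j)) + maxv (fun j => Num.min (p j) (q j))
  <= maxv p + maxv q.
Proof.
have hmax : maxv (fun j => Num.max (p j) (q j)) <= Num.max (maxv p) (maxv q).
  by apply: maxv_lub => j; rewrite ge_max !le_max !maxv_ub orbT.
have hmin : maxv (fun j => Num.min (p j) (q j)) <= Num.min (maxv p) (maxv q).
  by apply: maxv_lub => j; rewrite le_min !ge_min !maxv_ub orbT.
by case: (leP (maxv p) (maxv q)) hmax hmin => _ hmax hmin; lra.
Qed.

End finite_max.

Section real_expectation.
Context {R : realType} {d : measure_display} {Omega : measurableType d}
  (P : probability Omega R).
Implicit Types (X Y : Omega -> R) (c : R).

Definition Ex X : R := fine (\int[P]_w (X w)%:E)%E.
Definition Pintegrable X := P.-integrable setT (EFin \o X).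

Lemma Pintegrable_cst c : Pintegrable (fun _ => c).
Proof. exact: finite_measure_integrable_cst. Qed.

Lemma PintegrableD X Y :
  Pintegrable X -> Pintegrable Y -> Pintegrable (fun w => X w + Y w).
Proof.
move=> iX iY.
by apply: eq_integrable (integrableD measurableT iX iY) => // w _ /=; rewrite EFinD.
Qed.

Lemma PintegrableZ c X : Pintegrable X -> Pintegrable (fun w => c * X w).
Proof.
move=> iX.
by apply: eq_integrable (integrableZl measurableT c iX) => // w _ /=; rewrite EFinM.
Qed.

Lemma integral_Ex X : Pintegrable X -> (\int[P]_w (X w)%:E)%E = (Ex X)%:E.
Proof. by move=> iX; rewrite /Ex fineK // (integrable_fin_num measurableT iX). Qed.

Lemma ExD X Y : Pintegrable X -> Pintegrable Y ->
  Ex (fun w => X w + Y w) = Ex X + Ex Y.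
Proof.
move=> iX iY; apply/EFin_inj; rewrite -integral_Ex ?PintegrableD // EFinD.
rewrite -!integral_Ex // -(integralD_EFin measurableT iX iY).
by apply: eq_integral => w _ /=; rewrite EFinD.
Qed.

Lemma ExZ c X : Pintegrable X -> Ex (fun w => c * X w) = c * Ex X.
Proof.
move=> iX; apply/EFin_inj; rewrite -integral_Ex ?PintegrableZ // EFinM.
rewrite -!integral_Ex // -(integralZl measurableT iX).
by apply: eq_integral => w _ /=; rewrite EFinM.
Qed.

Lemma Ex_cst c : Ex (fun _ => c) = c.
Proof. by rewrite /Ex integral_cst //= probability_setT mule1. Qed.

Lemma ler_Ex X Y : Pintegrable X -> Pintegrable Y -> (forall w, X w <= Y w) ->
  Ex X <= Ex Y.
Proof.
move=> iX iY XY; rewrite -lee_fin -!integral_Ex //.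
by apply: le_integral => // w _; rewrite lee_fin.
Qed.

End real_expectation.

Lemma measurable_emaxv {R : realType} {N : nat} {d : measure_display}
  {Omega : measurableType d} (f : 'I_N -> Omega -> R) :
  (forall j, measurable_fun setT (f j)) ->
  measurable_fun setT ((fun w => emaxv (fun j => f j w)) : Omega -> \bar R).
Proof.
move=> mf; rewrite /emaxv; elim: (index_enum _) => [|j s IH].
  by under eq_fun do rewrite big_nil; exact: measurable_cst.
under eq_fun do rewrite big_cons.
by apply: measurable_maxe => //; exact/measurable_EFinP.
Qed.

Lemma max_bumps {R : realType} {N : nat} (y : 'rV[R]_N) i j (a b : R) k :
  i != j -> 0 <= a -> 0 <= b ->
  Num.max ((y + a *: evec i) 0 k) ((y + b *: evec j) 0 k)
  = (y + a *: evec i + b *: evec j) 0 k.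
Proof.
move=> ij a0 b0; rewrite !mxE /=.
case: (eqVneq k i) => [->|ki].
  by rewrite (negbTE ij) !mulr1 !mulr0 !addr0 max_l ?lerDl.
case: (eqVneq k j) => [->|kj]; first by rewrite !mulr1 !mulr0 !addr0 max_r ?lerDl.
by rewrite !mulr0 !addr0 maxxx.
Qed.

Lemma min_bumps {R : realType} {N : nat} (y : 'rV[R]_N) i j (a b : R) k :
  i != j -> 0 <= a -> 0 <= b ->
  Num.min ((y + a *: evec i) 0 k) ((y + b *: evec j) 0 k) = y 0 k.
Proof.
move=> ij a0 b0; rewrite !mxE /=.
case: (eqVneq k i) => [->|ki].
  by rewrite (negbTE ij) !mulr1 !mulr0 !addr0 min_r ?lerDl.
case: (eqVneq k j) => [->|kj]; first by rewrite !mulr1 !mulr0 !addr0 min_l ?lerDl.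
by rewrite !mulr0 !addr0 minxx.
Qed.

Section surplus.
Context {R : realType} {N : nat} {d : measure_display} {Omega : measurableType d}
  (P : probability Omega R) (eps : Omega -> 'rV[R]_N) (i0 : 'I_N).
Hypothesis meps : forall i, measurable_fun setT (fun w => eps w 0 i).
Hypothesis ieps : forall i, P.-integrable setT (fun w => (eps w 0 i)%:E).
Implicit Types (th y : 'rV[R]_N) (eta c : R).

Definition max_utility th eta w : R := maxv (fun j => th 0 j + eta * eps w 0 j).

Lemma Pintegrable_utility j c eta : Pintegrable P (fun w => c + eta * eps w 0 j).
Proof. by apply: PintegrableD; [exact: Pintegrable_cst | exact/PintegrableZ/ieps]. Qed.

Lemma Pintegrable_max_utility th eta : Pintegrable P (max_utility th eta).
Proof.
apply: (@le_integrable _ _ _ P setT measurableT _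
   (EFin \o (fun w => \sum_(j < N) `|th 0 j + eta * eps w 0 j|))).
- rewrite /comp; under eq_fun do rewrite /max_utility -(emaxvE i0).
  apply: measurable_emaxv => j; apply: measurable_funD; first exact: measurable_cst.
  by apply: measurable_funM => //; exact: measurable_cst.
- move=> w _ /=; rewrite lee_fin.
  by apply: le_trans (maxv_norm_le i0 _) _; rewrite ger0_norm // sumr_ge0.
- apply: (eq_integrable measurableT
    (fun w => \sum_(j <- index_enum 'I_N | xpredT j) (`|th 0 j + eta * eps w 0 j|)%:E)).
    by move=> w _; rewrite sumEFin.
  apply: integrable_sum => [|j _]; first exact: measurableT.
  exact: (integrable_norm (Pintegrable_utility j (th 0 j) eta)).
Qed.

Lemma surplusE th eta : surplus P eps eta th = Ex P (max_utility th eta).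
Proof.
by congr fine; apply: eq_integral => w _; rewrite /max_utility -(emaxvE i0).
Qed.

Lemma surplus_scale th eta : 0 < eta ->
  surplus P eps eta th = eta * surplus P eps 1 (eta^-1 *: th).
Proof.
move=> eta0; rewrite !surplusE -ExZ; last exact: Pintegrable_max_utility.
congr Ex; apply: funext => w; rewrite /max_utility -(maxvZ i0) //.
by congr maxv; apply: funext => j; rewrite !mxE; field; exact: lt0r_neq0.
Qed.

Lemma surplus_shift th c :
  surplus P eps 1 (th + c *: const_mx 1) = surplus P eps 1 th + c.
Proof.
rewrite !surplusE -[in RHS](Ex_cst P c).
rewrite -ExD ?Pintegrable_max_utility ?Pintegrable_cst //.
congr Ex; apply: funext => w; rewrite /max_utility -(maxvDr i0).
by congr maxv; apply: funext => j; rewrite !mxE; ring.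
Qed.

Lemma surplus_submod y i j (a b : R) : i != j -> 0 <= a -> 0 <= b ->
  surplus P eps 1 (y + a *: evec i + b *: evec j) + surplus P eps 1 y <=
  surplus P eps 1 (y + a *: evec i) + surplus P eps 1 (y + b *: evec j).
Proof.
move=> ij a0 b0; rewrite !surplusE -!ExD ?Pintegrable_max_utility //.
apply: ler_Ex => [||w]; try by apply: PintegrableD; exact: Pintegrable_max_utility.
pose p k := (y + a *: evec i) 0 k + 1 * eps w 0 k.
pose q k := (y + b *: evec j) 0 k + 1 * eps w 0 k.
rewrite /max_utility.
have -> : (fun k => (y + a *: evec i + b *: evec j) 0 k + 1 * eps w 0 k) =
    (fun k => Num.max (p k) (q k)).
  by apply: funext => k; rewrite -addr_maxl max_bumps.
have -> : (fun k => y 0 k + 1 * eps w 0 k) = (fun k => Num.min (p k) (q k)).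
  by apply: funext => k; rewrite -addr_minl min_bumps.
exact: maxv_max_min.
Qed.

Hypothesis Eeps : forall i, expectation P (fun w => eps w 0 i) = 0%E.

Lemma surplus_ge_coord th i : th 0 i <= surplus P eps 1 th.
Proof.
have Ex_eps : Ex P (fun w => eps w 0 i) = 0.
  by rewrite /Ex; move: (Eeps i); rewrite unlock => ->.
rewrite surplusE.
have -> : th 0 i = Ex P (fun w => th 0 i + 1 * eps w 0 i).
  rewrite ExD; [|exact: Pintegrable_cst|exact/PintegrableZ/ieps].
  by rewrite Ex_cst ExZ ?Ex_eps ?mulr0 ?addr0 //; exact: ieps.
apply: ler_Ex => [||w]; first exact: Pintegrable_utility.
  exact: Pintegrable_max_utility.
exact: (maxv_ub i0 (fun j => th 0 j + 1 * eps w 0 j)).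
Qed.

End surplus.

Lemma taylor2_le {R : realType} (h g q : R -> R) (K : R) :
  (forall s : R, is_derive s 1 h (g s)) -> (forall s : R, is_derive s 1 g (q s)) ->
  (forall s : R, q s <= K) -> h 1 <= h 0 + g 0 + K / 2.
Proof.
move=> dh dg qK.
have scaleE (a b : R) : a *: b = a * b by [].
have g_growth c : 0 <= c -> g c - g 0 <= K * c.
  rewrite le0r => /orP[/eqP->|c0]; first by rewrite subrr mulr0.
  have cg : {within `[0, c], continuous g}.
    apply: derivable_within_continuous => s _.
    exact: (@ex_derive _ _ _ _ _ _ _ (dg s)).
  have [xi _ ->] := MVT c0 (fun s _ => dg s) cg.
  by rewrite subr0 ler_pM2r.
pose psi := h - g 0 \*: (id : R -> R) - (K / 2) \*: ((id : R -> R) * (id : R -> R)).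
have dpsi (s : R) : is_derive s 1 psi (g s - g 0 - K * s).
  have := is_deriveB (is_deriveB (dh s) (is_deriveZ (g 0) (is_derive_id s 1)))
    (is_deriveZ (K / 2) (is_deriveM (is_derive_id s 1) (is_derive_id s 1))).
  by move/is_derive_eq; apply; rewrite /= !scaleE !mulr1; field.
have cpsi : {within `[0, 1], continuous psi}.
  apply: derivable_within_continuous => s _.
  exact: (@ex_derive _ _ _ _ _ _ _ (dpsi s)).
have [xi] := MVT ltr01 (fun s _ => dpsi s) cpsi.
rewrite in_itv /= => /andP[xi0 _].
have psiE (s : R) : psi s = h s - g 0 * s - K / 2 * (s * s) by [].
rewrite !psiE => psi_incr.
by have := g_growth xi (ltW xi0); move: psi_incr; lra.
Qed.

Section directional_derivatives.
Context {R : realType} {N : nat}.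
Implicit Types (f : 'rV[R]_N -> R) (x y u : 'rV[R]_N).

Lemma line_difference_quotient f x u (s : R) :
  (fun h : R => h^-1 *: (((fun s : R => f (x + s *: u)) \o shift s) (h *: 1)
                         - f (x + s *: u))) =
  (fun h : R => h^-1 *: ((f \o shift (x + s *: u)) (h *: u) - f (x + s *: u))).
Proof.
apply: funext => h /=; congr (_ *: (_ - _)); congr f.
by rewrite [h%:A]mulr1 scalerDl addrCA.
Qed.

Lemma derive_line f x u (s : R) :
  'D_1 (fun s : R => f (x + s *: u)) s = 'D_u f (x + s *: u).
Proof. by rewrite /derive line_difference_quotient. Qed.

Lemma derivable_line f x u (s : R) :
  derivable f (x + s *: u) u -> derivable (fun s : R => f (x + s *: u)) s 1.
Proof. by rewrite /derivable line_difference_quotient. Qed.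

Lemma is_derive_line f x u (s : R) : differentiable f (x + s *: u) ->
  is_derive s 1 (fun s : R => f (x + s *: u)) ('D_u f (x + s *: u)).
Proof.
move=> df; apply: DeriveDef; last exact: derive_line.
by apply: derivable_line; exact: diff_derivable.
Qed.

Lemma dotv_gradE f u y : dotv u (grad f y) = \sum_(i < N) u 0 i * partial i f y.
Proof. by apply: eq_bigr => i _; rewrite mxE. Qed.

Lemma derive_dotv_grad f u y : differentiable f y -> 'D_u f y = dotv u (grad f y).
Proof.
move=> df; rewrite dotv_gradE deriveE // {1}(row_sum_delta u) linear_sum.
by apply: eq_bigr => i _; rewrite linearZ /partial deriveE.
Qed.

Lemma is_derive_lincomb (p : 'I_N -> 'rV[R]_N -> R) (c : 'I_N -> R) y u :
  (forall i, derivable (p i) y u) ->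
  is_derive y u (fun z => \sum_(i < N) c i * p i z)
    (\sum_(i < N) c i * 'D_u (p i) y).
Proof.
move=> dp.
have -> : (fun z => \sum_(i < N) c i * p i z) = \sum_(i < N) (c i \*: p i).
  by rewrite fct_sumE; apply: funext => z; apply: eq_bigr.
by apply: is_derive_sum => i; apply: is_deriveZ; exact: derivableP.
Qed.

Definition hess_quad f u y : R :=
  \sum_(i < N) u 0 i * \sum_(j < N) u 0 j * partial j (partial i f) y.

Variable f : 'rV[R]_N -> R.
Hypothesis df : forall y, differentiable f y.
Hypothesis dpf : forall i y, differentiable (partial i f) y.

Lemma is_derive_line_grad x u (s : R) :
  is_derive s 1 (fun s : R => f (x + s *: u)) (dotv u (grad f (x + s *: u))).
Proof. by apply: is_derive_eq; [exact: is_derive_line | rewrite derive_dotv_grad]. Qed.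

Lemma is_derive_line_hess x u (s : R) :
  is_derive s 1 (fun s : R => dotv u (grad f (x + s *: u)))
    (hess_quad f u (x + s *: u)).
Proof.
pose G z := dotv u (grad f z).
have dG y : is_derive y u G (\sum_(i < N) u 0 i * 'D_u (partial i f) y).
  have -> : G = fun z => \sum_(i < N) u 0 i * partial i f z.
    by apply: funext => z; exact: dotv_gradE.
  by apply: is_derive_lincomb => i; exact: diff_derivable.
change (is_derive s 1 (fun s : R => G (x + s *: u)) (hess_quad f u (x + s *: u))).
apply: DeriveDef.
  by apply: derivable_line; exact: (@ex_derive _ _ _ _ _ _ _ (dG (x + s *: u))).
rewrite derive_line (@derive_val _ _ _ _ _ _ _ (dG (x + s *: u))).
by apply: eq_bigr => i _; rewrite derive_dotv_grad // dotv_gradE.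
Qed.

Lemma taylor2_le_line x u (K : R) : (forall s : R, hess_quad f u (x + s *: u) <= K) ->
  f (x + u) <= f x + dotv u (grad f x) + K / 2.
Proof.
move=> hK.
have := @taylor2_le _ _ _ _ K (is_derive_line_grad x u) (is_derive_line_hess x u) hK.
by rewrite scale1r scale0r addr0.
Qed.

End directional_derivatives.

Lemma nonincreasing_derive_le0 {R : realType} (g : R -> R) (x : R) :
  (forall s, derivable g s 1) -> (forall a b, a <= b -> g b <= g a) ->
  'D_1 g x <= 0.
Proof.
move=> dg g_nonincr; apply/ler_addgt0Pr => e e0; rewrite add0r.
have scaleE (a b : R) : a *: b = a * b by [].
pose k := g - e \*: (id : R -> R).
have kE s : k s = g s - e * s by [].
have dk (s : R) : is_derive s 1 k ('D_1 g s - e *: 1).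
  exact: (is_deriveB (derivableP (dg s)) (is_deriveZ e (is_derive_id s 1))).
have : derive1 k x <= 0.
  apply: (@decr_derive1_le0 _ k setT x); last by rewrite interiorT.
    by move=> s _; exact: (@ex_derive _ _ _ _ _ _ _ (dk s)).
  move=> a b _ _ ba; have := g_nonincr _ _ (ltW ba).
  have : e * b < e * a by rewrite ltr_pM2l.
  by rewrite !kE; lra.
by rewrite derive1E (@derive_val _ _ _ _ _ _ _ (dk x)) scaleE mulr1 subr_le0.
Qed.

Section surplus_hessian.
Context {R : realType} {N : nat}.
Variable f : 'rV[R]_N -> R.
Hypothesis df : forall y, differentiable f y.
Hypothesis dpf : forall i y, differentiable (partial i f) y.
Hypothesis f_shift : forall y c, f (y + c *: const_mx 1) = f y + c.
Hypothesis f_submod : forall y i j (a b : R), i != j -> 0 <= a -> 0 <= b ->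
  f (y + a *: evec i + b *: evec j) + f y <= f (y + a *: evec i) + f (y + b *: evec j).
Implicit Types (y u : 'rV[R]_N).

Lemma sum_partial y : \sum_(i < N) partial i f y = 1.
Proof.
have d1 := is_deriveD (is_derive_cst (f y) (0 : R) (1 : R)) (is_derive_id (0 : R) 1).
have := derive_line f y (const_mx 1) 0.
under eq_fun do rewrite f_shift.
rewrite (@derive_val _ _ _ _ _ _ _ d1) add0r scale0r addr0.
rewrite derive_dotv_grad // dotv_gradE => ->.
by apply: eq_bigr => i _; rewrite mxE mul1r.
Qed.

Lemma partial_nonincr y i j (b : R) : i != j -> 0 <= b ->
  partial i f (y + b *: evec j) <= partial i f y.
Proof.
move=> ij b0.
(* Submodularity makes [k] nonincreasing; its derivative at 0 is the difference
   of the two partial derivatives. *)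
pose k (a : R) := f (y + b *: evec j + a *: evec i) - f (y + a *: evec i).
have dk (s : R) : is_derive s 1 k
    ('D_(evec i) f (y + b *: evec j + s *: evec i) - 'D_(evec i) f (y + s *: evec i)).
  by apply: is_deriveB; exact: is_derive_line.
have := @nonincreasing_derive_le0 _ k 0.
rewrite (@derive_val _ _ _ _ _ _ _ (dk 0)) !scale0r !addr0 subr_le0; apply.
  by move=> s; exact: (@ex_derive _ _ _ _ _ _ _ (dk s)).
move=> a a' aa'; rewrite /k.
have := f_submod (y + a *: evec i) i j (a' - a) b ij; rewrite subr_ge0 => /(_ aa' b0).
have -> : y + a *: evec i + (a' - a) *: evec i + b *: evec j =
    y + b *: evec j + a' *: evec i by apply/matrixP => r c; rewrite !mxE; ring.
have -> : y + a *: evec i + (a' - a) *: evec i = y + a' *: evec i.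
  by apply/matrixP => r c; rewrite !mxE; ring.
have -> : y + a *: evec i + b *: evec j = y + b *: evec j + a *: evec i.
  by apply/matrixP => r c; rewrite !mxE; ring.
lra.
Qed.

Lemma hess_offdiag_le0 y i j : i != j -> partial j (partial i f) y <= 0.
Proof.
move=> ij.
pose psi (s : R) := partial i f (y + s *: evec j).
have dpsi (s : R) : is_derive s 1 psi ('D_(evec j) (partial i f) (y + s *: evec j)).
  exact: is_derive_line.
have := @nonincreasing_derive_le0 _ psi 0.
rewrite (@derive_val _ _ _ _ _ _ _ (dpsi 0)) scale0r addr0; apply.
  by move=> s; exact: (@ex_derive _ _ _ _ _ _ _ (dpsi s)).
move=> a b ab; rewrite /psi.
have -> : y + b *: evec j = y + a *: evec j + (b - a) *: evec j.
  by apply/matrixP => r c; rewrite !mxE; ring.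
by apply: partial_nonincr => //; rewrite subr_ge0.
Qed.

Lemma hess_col_sum y j : \sum_(i < N) partial j (partial i f) y = 0.
Proof.
have dp i : derivable (partial i f) y (evec j) by exact: diff_derivable.
have := @derive_val _ _ _ _ _ _ _ (is_derive_lincomb _ (fun _ => 1) y (evec j) dp).
have -> : (fun z => \sum_(i < N) 1 * partial i f z) = cst 1.
  by apply: funext => z; under eq_bigr do rewrite mul1r; exact: sum_partial.
rewrite derive_cst => /esym; under eq_bigr do rewrite mul1r; exact.
Qed.

Lemma hess_diag_ge0 y j : 0 <= partial j (partial j f) y.
Proof.
have := hess_col_sum y j; rewrite (bigD1 j) //= => /eqP.
rewrite addr_eq0 => /eqP ->; rewrite oppr_ge0.
by apply: sumr_le0 => i ij; exact: hess_offdiag_le0.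
Qed.

Lemma hess_quad_le u y (m : R) : (forall k, `|u 0 k| <= m) ->
  hess_quad f u y <= m ^+ 2 * (2 * hess_trace f y).
Proof.
move=> um.
pose H i j := partial j (partial i f) y.
(* The right-hand side is m^2 |H i j|, by the sign pattern of the Hessian. *)
have entry_le i j :
    u 0 i * u 0 j * H i j <= m ^+ 2 * (2 * (i == j)%:R * H i j - H i j).
  have := um i; have := um j; rewrite !ler_norml => /andP[b1 b2] /andP[a1 a2].
  case: (eqVneq i j) => [<-|ij].
    have uu : u 0 i * u 0 i <= m ^+ 2 by rewrite expr2; nra.
    have := hess_diag_ge0 y i; rewrite /H mulr1; nra.
  have uu : - m ^+ 2 <= u 0 i * u 0 j by rewrite expr2; nra.
  have := hess_offdiag_le0 y _ _ ij; rewrite /H mulr0 mul0r sub0r; nra.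
rewrite /hess_quad; under eq_bigr do rewrite mulr_sumr.
apply: le_trans (_ : \sum_(i < N) \sum_(j < N)
    m ^+ 2 * (2 * (i == j)%:R * H i j - H i j) <= _).
  by apply: ler_sum => i _; apply: ler_sum => j _; rewrite mulrA; exact: entry_le.
rewrite exchange_big /=; under eq_bigr do rewrite -mulr_sumr.
rewrite -mulr_sumr; apply: ler_wpM2l; first exact: sqr_ge0.
rewrite /hess_trace mulr_sumr le_eqVlt; apply/orP; left; apply/eqP.
apply: eq_bigr => j _; rewrite sumrB (hess_col_sum y j) subr0.
rewrite (bigD1 j) //= eqxx mulr1 big1 ?addr0 // => i ij.
by rewrite (negbTE ij) mulr0 mul0r.
Qed.

Variable L : R.
Hypothesis hess_trace_le : forall y, 2 * hess_trace f y <= L.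

Lemma increment_le y u (m : R) : (forall k, `|u 0 k| <= m) ->
  f (y + u) <= f y + dotv u (grad f y) + m ^+ 2 * L / 2.
Proof.
move=> um; apply: taylor2_le_line => // s.
apply: le_trans (hess_quad_le _ _ _ um) _.
by apply: ler_wpM2l; [exact: sqr_ge0 | exact: hess_trace_le].
Qed.

End surplus_hessian.

Lemma grad_scale {R : realType} {N : nat} (g f : 'rV[R]_N -> R) (eta : R)
  (th : 'rV[R]_N) :
  0 < eta -> (forall z, g z = eta * f (eta^-1 *: z)) ->
  (forall y, differentiable f y) ->
  grad g th = grad f (eta^-1 *: th).
Proof.
move=> eta0 gE df; apply/rowP => i; rewrite !mxE.
have scaleE (a b : R) : a *: b = a * b by [].
rewrite /partial -[th in LHS]addr0 -[0 in LHS](scale0r (evec i)) -derive_line.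
pose k (s : R) := f (eta^-1 *: th + s *: evec i).
pose l : R -> R := eta^-1 \*: (id : R -> R).
have -> : (fun s : R => g (th + s *: evec i)) = eta \*: (k \o l).
  by apply: funext => s; rewrite gE /k /l /= scalerDr scalerA.
have dl (s : R) : is_derive s 1 l (eta^-1 *: 1).
  exact: (is_deriveZ eta^-1 (is_derive_id s 1)).
have dkl : derivable (k \o l) 0 1.
  apply/derivable1_diffP; apply: differentiable_comp.
    by apply/derivable1_diffP; exact: (@ex_derive _ _ _ _ _ _ _ (dl 0)).
  by apply/derivable1_diffP; apply: derivable_line; exact: diff_derivable.
rewrite deriveZ // -derive1E derive1_comp //; last first.
  by apply: derivable_line; exact: diff_derivable.
rewrite !derive1E (@derive_val _ _ _ _ _ _ _ (dl 0)).
have -> : l 0 = 0 by rewrite /l /= scaleE mulr0.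
rewrite /k derive_line scale0r addr0 !scaleE mulr1 mulrCA mulfV ?mulr1 //.
exact: lt0r_neq0.
Qed.

Section dotv_simplex.
Context {R : realType} {N : nat}.
Implicit Types (x y th : 'rV[R]_N).

Lemma dotvZl (a : R) x y : dotv (a *: x) y = a * dotv x y.
Proof. by rewrite /dotv mulr_sumr; apply: eq_bigr => i _; rewrite mxE mulrA. Qed.

Lemma dotv0l y : dotv 0 y = 0.
Proof. by rewrite /dotv big1 // => i _; rewrite mxE mul0r. Qed.

Lemma evec_simplex i : simplex (evec i : 'rV[R]_N).
Proof.
split=> [j|]; first by rewrite mxE ler0n.
rewrite (bigD1 i) //= mxE !eqxx /= big1 ?addr0 // => j ji.
by rewrite mxE (negbTE ji) andbF.
Qed.

Lemma sup_dotv_simplex_le (i0 : 'I_N) th (c : R) : (forall i, th 0 i <= c) ->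
  sup [set dotv th y | y in @simplex R N] <= c.
Proof.
move=> thc; apply: ge_sup.
  by exists (dotv th (evec i0)), (evec i0) => //; exact: evec_simplex.
move=> _ [y [y0 y1] <-]; rewrite /dotv -[c]mulr1 -y1 mulr_sumr.
by apply: ler_sum => i _; apply: ler_wpM2r.
Qed.

End dotv_simplex.

Lemma cumul0 {R : realType} {N : nat} (u : nat -> 'rV[R]_N) : cumul u 0 = 0.
Proof. by rewrite /cumul big_geq. Qed.

Lemma cumulS {R : realType} {N : nat} (u : nat -> 'rV[R]_N) t :
  cumul u t.+1 = cumul u t + u t.+1.
Proof. by rewrite /cumul big_nat_recr. Qed.

Lemma regret_eq0 {R : realType} {N : nat} (i0 : 'I_N) T (u x : nat -> 'rV[R]_N) :
  (forall t, (1 <= t <= T)%N -> u t = 0) -> regret T u x = 0.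
Proof.
move=> u0; rewrite /regret.
have -> : cumul u T = 0.
  by rewrite /cumul big_nat_cond big1 // => t /andP[/andP[t1 tT] _]; rewrite u0 ?t1.
have -> : [set dotv 0 y | y in @simplex R N] = [set 0].
  apply/seteqP; split=> [_ [y _ <-]|_ ->] /=; first by rewrite dotv0l.
  by exists (evec i0); [exact: evec_simplex | rewrite dotv0l].
rewrite sup1 big_nat_cond big1 ?subrr // => t /andP[/andP[t1 tT] _].
by rewrite u0 ?t1 // dotv0l.
Qed.

Lemma telescope_le {R : realDomainType} (a b : nat -> R) (C : R) T :
  (forall t, (1 <= t <= T)%N -> a t <= a t.-1 + b t + C) ->
  a T <= a 0%N + \sum_(1 <= t < T.+1) b t + T%:R * C.
Proof.
elim: T => [_|T IH step]; first by rewrite big_geq // mul0r !addr0.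
have stepT t : (1 <= t <= T)%N -> a t <= a t.-1 + b t + C.
  by case/andP=> t1 tT; apply: step; rewrite t1 ltnW.
have last_step : a T.+1 <= a T + b T.+1 + C by apply: step; rewrite leqnn.
have IHT := IH stepT; rewrite big_nat_recr //= mulrSr mulrDl mul1r; lra.
Qed.

Lemma optimal_eta {R : realType} (a L T m : R) : 0 < a -> 0 < L -> 0 < T -> 0 < m ->
  let eta := Num.sqrt (L * T * m ^+ 2 / (2 * a)) in
  0 < eta /\ eta * a + L / (2 * eta) * T * m ^+ 2 = m * Num.sqrt (2 * a * L * T).
Proof.
move=> a0 L0 T0 m0 eta.
have K0 : 0 < L * T * m ^+ 2 / (2 * a) by rewrite divr_gt0 ?mulr_gt0 ?exprn_gt0.
have eta0 : 0 < eta by rewrite sqrtr_gt0.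
have eta_neq0 := lt0r_neq0 eta0; have a_neq0 := lt0r_neq0 a0.
have eta2 : eta ^+ 2 = L * T * m ^+ 2 / (2 * a) by rewrite sqr_sqrtr // ltW.
have rhsE : m * Num.sqrt (2 * a * L * T) = 2 * a * eta.
  apply/eqP; rewrite -(@eqrXn2 _ 2) // ?mulr_ge0 ?sqrtr_ge0 ?(ltW a0) ?(ltW m0) //.
  rewrite !exprMn eta2 sqr_sqrtr ?mulr_ge0 ?(ltW a0) ?(ltW L0) ?(ltW T0) //.
  by apply/eqP; field.
split=> //; rewrite rhsE.
have -> : L / (2 * eta) * T * m ^+ 2 = L * T * m ^+ 2 / (2 * eta) by field.
have -> : L * T * m ^+ 2 = 2 * a * eta ^+ 2 by rewrite eta2; field.
by field.
Qed.

Section ssa_regret.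
Context {R : realType} {N : nat} {d : measure_display} {Omega : measurableType d}
  (P : probability Omega R) (eps : Omega -> 'rV[R]_N) (i0 : 'I_N) (L : R).
Hypothesis meps : forall i, measurable_fun setT (fun w => eps w 0 i).
Hypothesis ieps : forall i, P.-integrable setT (fun w => (eps w 0 i)%:E).
Hypothesis Eeps : forall i, expectation P (fun w => eps w 0 i) = 0%E.
Hypothesis df : forall y, differentiable (surplus P eps 1) y.
Hypothesis dpf : forall i y, differentiable (partial i (surplus P eps 1)) y.
Hypothesis hess_trace_le : forall y, 2 * hess_trace (surplus P eps 1) y <= L.

Lemma ssa_regret_le eta T (u : nat -> 'rV[R]_N) (umax : R) : 0 < eta ->
  (forall t, (1 <= t <= T)%N -> forall i, `|u t 0 i| <= umax) ->
  regret T u (ssa P eps eta u)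
    <= eta * surplus P eps 1 0 + L / (2 * eta) * T%:R * umax ^+ 2.
Proof.
move=> eta0 ub.
have eta_neq0 := lt0r_neq0 eta0.
pose f := surplus P eps 1.
pose y t := eta^-1 *: cumul u t.
have ssaE t : ssa P eps eta u t = grad f (y t.-1).
  by apply: grad_scale => // z; exact: surplus_scale.
have step t : (1 <= t <= T)%N -> eta * f (y t) <=
    eta * f (y t.-1) + dotv (u t) (ssa P eps eta u t) + L / (2 * eta) * umax ^+ 2.
  case: t => // t /andP[_ tT] /=.
  have yS : y t.+1 = y t + eta^-1 *: u t.+1 by rewrite /y cumulS scalerDr.
  have v_le k : `|(eta^-1 *: u t.+1) 0 k| <= umax / eta.
    rewrite mxE normrM ger0_norm ?invr_ge0 ?(ltW eta0) // mulrC ler_pM2r ?invr_gt0 //.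
    by apply: ub; rewrite tT.
  have := increment_le _ df dpf (surplus_shift P eps i0 meps ieps)
    (surplus_submod P eps i0 meps ieps) _ hess_trace_le (y t) _ _ v_le.
  rewrite -yS ssaE dotvZl => /(ler_wpM2l (ltW eta0)).
  have -> : L / (2 * eta) * umax ^+ 2 = eta * ((umax / eta) ^+ 2 * L / 2) by field.
  by rewrite !mulrDr mulrA mulfV // mul1r.
have sup_le : sup [set dotv (cumul u T) z | z in @simplex R N] <= eta * f (y T).
  apply: (sup_dotv_simplex_le i0) => i.
  have := ler_wpM2l (ltW eta0) (surplus_ge_coord P eps i0 meps ieps Eeps (y T) i).
  by rewrite /y mxE mulrA mulfV // mul1r.
have := telescope_le (fun t => eta * f (y t))
  (fun t => dotv (u t) (ssa P eps eta u t)) _ _ step.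
by rewrite /y cumul0 scaler0 /regret -/f; lra.
Qed.

End ssa_regret.

Theorem theorem1 (R : realType) (N : nat) (d : measure_display)
  (Omega : measurableType d) (P : probability Omega R)
  (eps : Omega -> 'rV[R]_N) (L : R) :
  (2 <= N)%N ->
  assumption1 P eps ->
  assumption2 (surplus P eps 1) L ->
  (forall (eta : R) (T : nat) (u : nat -> 'rV[R]_N) (umax : R),
     0 < eta -> (1 <= T)%N ->
     (forall t, (1 <= t <= T)%N -> forall i, `|u t 0 i| <= umax) ->
     regret T u (ssa P eps eta u)
       <= eta * surplus P eps 1 0 + L / (2 * eta) * T%:R * umax ^+ 2) /\
  (forall (T : nat) (u : nat -> 'rV[R]_N) (umax : R),
     (1 <= T)%N ->
     (forall t, (1 <= t <= T)%N -> forall i, `|u t 0 i| <= umax) ->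
     0 < surplus P eps 1 0 ->
     let eta := Num.sqrt (L * T%:R * umax ^+ 2 / (2 * surplus P eps 1 0)) in
     regret T u (ssa P eps eta u)
       <= umax * Num.sqrt (2 * surplus P eps 1 0 * L * T%:R)).
Proof.
move=> N2 [meps [ieps [Eeps _]]] [[df [dpf _]] [L0 hess_trace_le]].
have i0 : 'I_N := Ordinal (leq_trans (isT : (0 < 2)%N) N2).
have bound := ssa_regret_le P eps i0 L meps ieps Eeps df dpf hess_trace_le.
split=> [eta T u umax eta0 _ ub|]; first exact: bound.
move=> T u umax T1 ub phi0 /=.
have umax_ge0 : 0 <= umax := le_trans (normr_ge0 _) (ub 1%N T1 i0).
(* For umax = 0 the prescribed eta is 0, outside the range of the first bound. *)
have [umax0 | umax_neq0] := eqVneq umax 0.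
  rewrite umax0 mul0r regret_eq0 // => t tT; apply/rowP => i.
  by rewrite mxE; apply/eqP; rewrite -normr_le0 -umax0 ub.
have T0 : 0 < T%:R :> R by rewrite ltr0n.
have umax_gt0 : 0 < umax by rewrite lt_neqAle eq_sym umax_neq0.
have [eta0 etaE] := optimal_eta _ _ _ _ phi0 L0 T0 umax_gt0.
by rewrite -etaE; exact: bound.
Qed.
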